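(* Let $P$ be a basic program. Every answer set by complement of $P$ is an answer set by reduct of $P$. Moreover, if $P$ is naf-monotone, then every answer set by reduct of $P$ is an answer set by complement of $P$.
   Context: Fix a countable set $\mathcal{A}$ of atoms. A c-atom is $A=(A_d,A_c)$, $A_d\subseteq\mathcal{A}$, $A_c\subseteq 2^{A_d}$; $(\{p\},\{\{p\}\})$ is the elementary c-atom $p$; $\bot=(\mathcal{A},\emptyset)$. $A$ is monotone if $X\subseteq Y\subseteq A_d$ and $X\in A_c$ imply $Y\in A_c$. A rule: $A\leftarrow A_1,\dots,A_k,\mathit{not}\,A_{k+1},\dots,\mathit{not}\,A_n$; $head(r)=A$, $pos(r)=\{A_1,\dots,A_k\}$, $neg(r)=\{A_{k+1},\dots,A_n\}$. Program = set of rules; positive if all $neg(r)=\emptyset$; basic if every head is elementary or $\bot$; naf-monotone if every c-atom in some $neg(r)$ is monotone. $S\models A$ iff $S\cap A_d\in A_c$; $S\models\mathit{not}\,A$ iff $S\cap A_d\notin A_c$; rule satisfied if head satisfied or some body element not satisfied; model = satisfies all rules. Conditional satisfaction: $S\models_M A$ iff $S\models A$ and every $I$ with $S\cap A_d\subseteq I\subseteq M\cap A_d$ lies in $A_c$. For positive basic $P$: $T_P(S,M)=\{a\mid \exists r\in P,\ head(r)=(\{a\},\{\{a\}\}),\ S\models_M B\ \forall B\in pos(r)\}$, $T^0_P(\emptyset,M)=\emptyset$, $T^{i+1}_P(\emptyset,M)=T_P(T^i_P(\emptyset,M),M)$, $T^\infty_P(\emptyset,M)=\bigcup_i T^i_P(\emptyset,M)$;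 a model $M$ of $P$ is an answer set iff $M=T^\infty_P(\emptyset,M)$. The complement of $A$ is $\bar A=(A_d,2^{A_d}\setminus A_c)$; $\mathcal{C}(P)$ is obtained from $P$ by replacing each $\mathit{not}\,A$ by $\bar A$; $M$ is an answer set by complement of basic $P$ iff it is an answer set of $\mathcal{C}(P)$. The reduct $P^M$ is obtained by deleting every rule having some $\mathit{not}\,A$ in its body with $M\models A$, and deleting all naf-literals from the remaining rules; $M$ is an answer set by reduct of $P$ iff it is an answer set of $P^M$. *)

From Stdlib Require Import List.
Import ListNotations.
Set Implicit Arguments.

Section Defs.
Variable Atom : Type.

Definition aset := Atom -> Prop.
Definition subset (X Y : aset) : Prop := forall x, X x -> Y x.
Definition set_eq (X Y : aset) : Prop := forall x, X x <-> Y x.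
Definition inter (X Y : aset) : aset := fun x => X x /\ Y x.

(* A c-atom A = (A_d, A_c), with A_c a set of subsets of A_d. *)
Record catom := CAtom { dom : aset ; conds : aset -> Prop }.

Definition wf_catom (A : catom) : Prop :=
  forall X, conds A X -> subset X (dom A).

Definition elem (p : Atom) : catom :=
  CAtom (fun x => x = p) (fun X => set_eq X (fun x => x = p)).

Definition bot : catom := CAtom (fun _ => True) (fun _ => False).

Definition monotone (A : catom) : Prop :=
  forall X Y, subset X Y -> subset Y (dom A) -> conds A X -> conds A Y.

Record rule := Rule { head : catom ; pos : list catom ; neg : list catom }.

Definition program := rule -> Prop.

Definition wf_program (P : program) : Prop :=
  forall r, P r -> wf_catom (head r) /\
    (forall A, In A (pos r) -> wf_catom A) /\ (forall A, In A (neg r) -> wf_catom A).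

Definition positive (P : program) : Prop := forall r, P r -> neg r = [].

Definition basic (P : program) : Prop :=
  forall r, P r -> (exists p, head r = elem p) \/ head r = bot.

Definition naf_monotone (P : program) : Prop :=
  forall r, P r -> forall A, In A (neg r) -> monotone A.

Definition sat (S : aset) (A : catom) : Prop := conds A (inter S (dom A)).

Definition sat_not (S : aset) (A : catom) : Prop := ~ conds A (inter S (dom A)).

Definition sat_rule (S : aset) (r : rule) : Prop :=
  sat S (head r) \/ (exists B, In B (pos r) /\ ~ sat S B)
                 \/ (exists B, In B (neg r) /\ ~ sat_not S B).

Definition model (S : aset) (P : program) : Prop := forall r, P r -> sat_rule S r.

Definition csat (S M : aset) (A : catom) : Prop :=
  sat S A /\ forall I, subset (inter S (dom A)) I -> subset I (inter M (dom A)) ->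
                       conds A I.

Definition TP (P : program) (S M : aset) : aset :=
  fun a => exists r, P r /\ head r = elem a /\ forall B, In B (pos r) -> csat S M B.

Fixpoint TPn (P : program) (M : aset) (n : nat) : aset :=
  match n with
  | 0 => fun _ => False
  | S n' => TP P (TPn P M n') M
  end.

Definition TPinf (P : program) (M : aset) : aset := fun a => exists n, TPn P M n a.

(* answer set of a positive basic program *)
Definition answer_set (P : program) (M : aset) : Prop :=
  model M P /\ set_eq M (TPinf P M).

Definition compl (A : catom) : catom :=
  CAtom (dom A) (fun X => subset X (dom A) /\ ~ conds A X).

Definition compl_rule (r : rule) : rule :=
  Rule (head r) (pos r ++ map compl (neg r)) [].

Definition complement_program (P : program) : program :=
  fun r' => exists r, P r /\ r' = compl_rule r.

Definition answer_set_by_complement (P : program) (M : aset) : Prop :=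
  answer_set (complement_program P) M.

Definition reduct (P : program) (M : aset) : program :=
  fun r' => exists r, P r /\ (forall A, In A (neg r) -> ~ sat M A) /\
                      r' = Rule (head r) (pos r) [].

Definition answer_set_by_reduct (P : program) (M : aset) : Prop :=
  answer_set (reduct P M) M.

End Defs.

From Pilot Require Import Defs.
From Stdlib Require Import List Classical.
Import ListNotations.
Set Implicit Arguments.

(* Both C(P) and the reduct P^M are positive basic programs, so both notions
   are fixpoint conditions M = T^oo(∅, M) plus the requirement that M is a
   model.

   1. Operator facts for positive programs: conditional satisfaction and T_Q
      are monotone in their first argument below M, the iterates of T_Q stay
      inside any model M, and hence a pointwise inclusion T_Q1(S,M) ⊆ T_Q2(S,M)
      for S ⊆ M transports "M is an answer set" from Q1 to Q2
      ([answer_set_transfer]).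
   2. The complement c-atom: M |= Ā iff M ⊭ A; if S ⊆ M and S |=_M Ā then
      M ⊭ A; and conversely for monotone A, M ⊭ A gives S |=_M Ā.
   3. Consequently M is a model of C(P) iff it is a model of P^M (for every
      program), T_{C(P)} ⊆ T_{P^M} always, and T_{P^M} ⊆ T_{C(P)} when P is
      naf-monotone.  The theorem follows by two applications of step 1.
   The argument does not need that P is basic or well formed, nor that the
   set of atoms is countable. *)

Section AnswerSetTransfer.
Variable Atom : Type.
Implicit Types (S M : aset Atom) (Q : program Atom) (A : catom Atom).

Lemma csat_mono S S' M A :
  subset S S' -> subset S' M -> csat S M A -> csat S' M A.
Proof.
  intros HSS' HS'M [_ Hall]. split.
  - apply Hall; intros x [Hx Hd]; split; auto.
  - intros I HI HIM. apply Hall; auto.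
    intros x [Hx Hd]. apply HI. split; auto.
Qed.

Lemma TP_mono Q S S' M :
  subset S S' -> subset S' M -> subset (TP Q S M) (TP Q S' M).
Proof.
  intros HSS' HS'M a [r [Hr [Hh Hpos]]].
  exists r. split; [exact Hr | split; [exact Hh |]].
  intros B HB. eapply csat_mono; eauto.
Qed.

(* For a positive program with model M, every iterate T_Q^n(∅, M) lies in M:
   a rule firing at stage n has its body satisfied by M, so its head a is in M. *)
Lemma TPn_sub_model Q M :
  positive Q -> model M Q -> forall n, subset (TPn Q M n) M.
Proof.
  intros Hpos Hm n. induction n as [|n IH]; simpl.
  - intros x [].
  - intros a [r [Hr [Hh Hbody]]].
    destruct (Hm r Hr) as [Hsat | [[B [HB HnB]] | [B [HB _]]]].
    + rewrite Hh in Hsat. destruct (Hsat a) as [_ Ha]. now destruct (Ha eq_refl).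
    + exfalso. apply HnB. destruct (Hbody B HB) as [_ Hall].
      apply Hall; [intros x [Hx Hd]; split; auto | intros x Hx; exact Hx].
    + rewrite (Hpos r Hr) in HB. destruct HB.
Qed.

Lemma TPn_incl Q1 Q2 M :
  (forall S, subset S M -> subset (TP Q1 S M) (TP Q2 S M)) ->
  (forall n, subset (TPn Q2 M n) M) ->
  forall n, subset (TPn Q1 M n) (TPn Q2 M n).
Proof.
  intros Hincl Hsub n. induction n as [|n IH]; simpl.
  - intros x [].
  - intros a Ha.
    apply (TP_mono (Q := Q2) IH (Hsub n)).
    apply Hincl; auto. intros x Hx. exact (Hsub n x (IH x Hx)).
Qed.

Lemma answer_set_transfer Q1 Q2 M :
  positive Q2 -> model M Q2 ->
  (forall S, subset S M -> subset (TP Q1 S M) (TP Q2 S M)) ->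
  answer_set Q1 M -> answer_set Q2 M.
Proof.
  intros Hpos Hm Hincl [_ Hfix].
  pose proof (TPn_sub_model Hpos Hm) as Hsub.
  split; [exact Hm|]. intros x. split.
  - intros Hx. destruct (proj1 (Hfix x) Hx) as [n Hn].
    exists n. exact (TPn_incl Hincl Hsub n x Hn).
  - intros [n Hn]. exact (Hsub n x Hn).
Qed.

Lemma sat_compl_iff M A : sat M (compl A) <-> ~ sat M A.
Proof.
  unfold sat; simpl. split.
  - intros [_ Hn]. exact Hn.
  - intros Hn. split; [intros x [_ Hd]; exact Hd | exact Hn].
Qed.

(* Conditional satisfaction of Ā below M forces M ⊭ A (take I = M ∩ A_d). *)
Lemma csat_compl_not_sat S M A :
  subset S M -> csat S M (compl A) -> ~ sat M A.
Proof.
  intros HSM [_ Hall].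
  destruct (Hall (inter M (dom A))) as [_ Hn].
  - intros x [Hx Hd]. split; auto.
  - intros x Hx. exact Hx.
  - exact Hn.
Qed.

(* For monotone A, M ⊭ A means no subset of M ∩ A_d is in A_c, so every S
   conditionally satisfies Ā with respect to M. *)
Lemma not_sat_csat_compl S M A :
  monotone A -> ~ sat M A -> subset S M -> csat S M (compl A).
Proof.
  intros Hmon HnM HSM.
  assert (Hnone : forall I, subset I (inter M (dom A)) -> ~ conds A I).
  { intros I HI HcI. apply HnM. apply (Hmon I); auto.
    intros x [_ Hd]. exact Hd. }
  split.
  - split; [intros x [_ Hd]; exact Hd|].
    apply Hnone. intros x [Hx Hd]. split; auto.
  - intros I HI HIM. split.
    + intros x Hx. exact (proj2 (HIM x Hx)).
    + apply Hnone; auto.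
Qed.

Lemma complement_program_positive (P : program Atom) : positive (complement_program P).
Proof. intros r' [r [_ ->]]. reflexivity. Qed.

Lemma reduct_positive (P : program Atom) M : positive (reduct P M).
Proof. intros r' [r [_ [_ ->]]]. reflexivity. Qed.

Lemma in_compl_rule_body r B :
  In B (pos (compl_rule r)) <->
  In B (pos r) \/ exists A, B = compl A /\ In A (neg r).
Proof.
  simpl. rewrite in_app_iff, in_map_iff. split.
  - intros [HB | [A [<- HA]]]; [left; exact HB | right; exists A; auto].
  - intros [HB | [A [-> HA]]]; [left; exact HB | right; exists A; auto].
Qed.

(* M is a model of C(P) iff it is a model of the reduct P^M: a rule of C(P)
   is blocked by a complement literal exactly when its original is deleted
   from the reduct. *)
Lemma model_complement_iff_reduct (P : program Atom) M :
  model M (complement_program P) <-> model M (reduct P M).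
Proof.
  split.
  - intros Hm r' [r [Hr [Hneg ->]]].
    destruct (Hm (compl_rule r) (ex_intro _ r (conj Hr eq_refl)))
      as [Hh | [[B [HB HnB]] | [B [HB _]]]].
    + left. exact Hh.
    + apply in_compl_rule_body in HB as [HB | [A [-> HA]]].
      * right. left. exists B. auto.
      * exfalso. apply HnB, sat_compl_iff, Hneg, HA.
    + destruct HB.
  - intros Hm r' [r [Hr ->]].
    destruct (classic (exists A, In A (neg r) /\ sat M A)) as [[A [HA HsA]] | Hno].
    + right. left. exists (compl A). split.
      * apply in_compl_rule_body. right. exists A. auto.
      * rewrite sat_compl_iff. tauto.
    + assert (Hred : reduct P M (Rule (Defs.head r) (pos r) [])).
      { exists r. repeat split; auto. intros A HA HsA. apply Hno. eauto. }
      destruct (Hm _ Hred) as [Hh | [[B [HB HnB]] | [B [HB _]]]].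
      * left. exact Hh.
      * right. left. exists B. split; auto. apply in_compl_rule_body. auto.
      * destruct HB.
Qed.

(* Below M, every atom derived by C(P) is derived by P^M: a complement rule
   whose body holds conditionally has no naf-literal true in M. *)
Lemma TP_complement_sub_reduct (P : program Atom) S M :
  subset S M -> subset (TP (complement_program P) S M) (TP (reduct P M) S M).
Proof.
  intros HSM a [r' [[r [Hr ->]] [Hh Hbody]]].
  exists (Rule (Defs.head r) (pos r) []). split; [| split; [exact Hh |]].
  - exists r. split; [exact Hr | split; [| reflexivity]].
    intros A HA. apply (csat_compl_not_sat HSM), Hbody.
    apply in_compl_rule_body. right. exists A. auto.
  - intros B HB. apply Hbody, in_compl_rule_body. auto.
Qed.

Lemma TP_reduct_sub_complement (P : program Atom) S M :
  naf_monotone P -> subset S M ->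
  subset (TP (reduct P M) S M) (TP (complement_program P) S M).
Proof.
  intros Hmon HSM a [r' [[r [Hr [Hneg ->]]] [Hh Hbody]]].
  exists (compl_rule r). split; [exists r; auto | split; [exact Hh|]].
  intros B HB. apply in_compl_rule_body in HB as [HB | [A [-> HA]]].
  - apply Hbody. exact HB.
  - apply not_sat_csat_compl; auto. exact (Hmon r Hr A HA).
Qed.

End AnswerSetTransfer.

Theorem proposition2 (Atom : Type)
  (Atom_countable : exists f : Atom -> nat, forall x y, f x = f y -> x = y)
  (P : program Atom) (HP : basic P) (Hwf : wf_program P) :
  (forall M : aset Atom, answer_set_by_complement P M -> answer_set_by_reduct P M) /\
  (naf_monotone P ->
   forall M : aset Atom, answer_set_by_reduct P M -> answer_set_by_complement P M).
Proof.
  split.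
  - intros M HM. apply (answer_set_transfer (Q1 := complement_program P)).
    + apply reduct_positive.
    + apply model_complement_iff_reduct. exact (proj1 HM).
    + intros S HSM. apply TP_complement_sub_reduct. exact HSM.
    + exact HM.
  - intros Hmon M HM. apply (answer_set_transfer (Q1 := reduct P M)).
    + apply complement_program_positive.
    + apply model_complement_iff_reduct. exact (proj1 HM).
    + intros S HSM. apply TP_reduct_sub_complement; assumption.
    + exact HM.
Qed.
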